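(* Let $\mathcal L$ be a finite lattice and $C\subseteq\bar{\mathcal L}$ a crosscut. Let $\bar{\mathcal L}_C$ be the set of elements of $\bar{\mathcal L}$ that are either the join of a nonempty subset of $C$ or the meet of a nonempty subset of $C$, with the induced order. Then $\Delta(\bar{\mathcal L})$ collapses onto $\Delta(\bar{\mathcal L}_C)$.
   Context: For a finite lattice $\mathcal L$ with minimum $\hat0$ and maximum $\hat1$, $\bar{\mathcal L}=\mathcal L\setminus\{\hat0,\hat1\}$. A crosscut is a subset $C\subseteq\bar{\mathcal L}$ that is an antichain and such that for every chain $\gamma$ of $\mathcal L$ there exists $x\in C$ with $\gamma\cup\{x\}$ a chain. $\Delta(Q)$ denotes the order complex of a poset $Q$ (simplices = nonempty chains). *)

From HB Require Import structures.
From mathcomp Require Import all_boot all_order.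
Set Implicit Arguments. Unset Strict Implicit. Unset Printing Implicit Defensive.
Import Order.TTheory.
Local Open Scope order_scope.

(* Finite simplicial complexes on a finite vertex type T are represented as
   sets of faces ({set {set T}}). *)

Section Defs.
Context {d : Order.disp_t} {L : finTBLatticeType d}.

Definition is_chain (s : {set L}) : bool :=
  [forall x in s, forall y in s, x >=< y].

Definition Lbar : {set L} := [set x : L | (x != \bot) && (x != \top)].

Definition crosscut (C : {set L}) : Prop :=
  [/\ C \subset Lbar,
      (forall x y, x \in C -> y \in C -> x <= y -> x = y)
    & forall g : {set L}, is_chain g -> exists2 x, x \in C & is_chain (x |: g)].

Definition LbarC (C : {set L}) : {set L} :=
  [set x in Lbar | [exists S : {set L}, (S != set0) && (S \subset C) &&
      ((x == \join_(y in S) y) || (x == \meet_(y in S) y))]].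

Definition order_complex (Q : {set L}) : {set {set L}} :=
  [set s : {set L} | [&& s != set0, s \subset Q & is_chain s]].
End Defs.

Section Collapse.
Context {T : finType}.

Definition elem_collapse (K K' : {set {set T}}) : Prop :=
  exists sigma tau : {set T},
    [/\ sigma \in K, tau \in K, sigma \proper tau,
        (forall rho, rho \in K -> sigma \subset rho -> rho = sigma \/ rho = tau)
      & K' = K :\: [set sigma; tau]].

Inductive collapses : {set {set T}} -> {set {set T}} -> Prop :=
  | collapses_refl K : collapses K K
  | collapses_step K K1 K' : elem_collapse K K1 -> collapses K1 K' -> collapses K K'.
End Collapse.

From mathcomp Require Import all_boot all_order.
Set Implicit Arguments. Unset Strict Implicit. Unset Printing Implicit Defensive.

(* The elements of Lbar outside LbarC C are deleted one at a time; each
   deletion is a collapse because the link of the deleted vertex x is a cone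
   with apex z: pair every face containing x but not z with its union with z
   and remove the pairs by decreasing size.  First delete the elements lying
   strictly above some element of C, minimal ones first, using as apex the
   join of the elements of C below x (a member of LbarC C).  Since a crosscut
   meets every element, each remaining element outside LbarC C lies strictly
   below some element of C, and the order-dual argument, with meets, removes
   these. *)

Lemma collapses_trans (T : finType) (K1 K2 K3 : {set {set T}}) :
  collapses K1 K2 -> collapses K2 K3 -> collapses K1 K3.
Proof. by elim=> // K K' K'' h _ IH /IH; apply: collapses_step. Qed.

Section PairedFaces.
Variables (T : finType) (z : T).

(* [R] is a disjoint union of pairs [{s, z |: s}] with [z \notin s]. *)
Definition paired_by (R : {set {set T}}) : Prop :=
  forall s : {set T}, z \notin s -> (s \in R) = (z |: s \in R).

Definition upper_disjoint (K R : {set {set T}}) : Prop :=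
  forall s t : {set T}, s \in R -> s \subset t -> t \notin K.

Lemma paired_by_setD (R : {set {set T}}) (s : {set T}) :
  paired_by R -> z \notin s -> paired_by (R :\: [set s; z |: s]).
Proof.
move=> pR zs t zt; rewrite !inE -pR //; congr (~~ _ && _).
have zts : (z |: t == s) = false by apply: contraNF zs => /eqP <-; rewrite setU11.
have tzs : (t == z |: s) = false by apply: contraNF zt => /eqP ->; rewrite setU11.
rewrite zts tzs orbF; apply/eqP/eqP => [-> //|ezt].
by rewrite -(setU1K zt) -(setU1K zs) ezt.
Qed.

Lemma elem_collapse_paired (K R : {set {set T}}) (s : {set T}) :
  paired_by R -> upper_disjoint K R -> s \in R -> z \notin s ->
  (forall t, t \in R -> z \notin t -> #|t| <= #|s|) ->
  elem_collapse (K :|: R) (K :|: (R :\: [set s; z |: s])).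
Proof.
move=> pR upR sR zs smax; have szR : z |: s \in R by rewrite -pR.
have notK t : t \in R -> t \notin K by move/upR; apply.
exists s, (z |: s); split.
- by rewrite inE sR orbT.
- by rewrite inE szR orbT.
- by rewrite properUr ?sub1set.
- move=> rho; rewrite inE => /orP [rK | rR] srho; first by case/negP: (upR _ _ sR srho).
  have maxeq t : t \in R -> z \notin t -> s \subset t -> t = s.
    by move=> tR zt st; apply/esym/eqP; rewrite eqEcard st smax.
  case: (boolP (z \in rho)) => zr; last by left; apply: maxeq.
  right; rewrite -(setD1K zr) (maxeq (rho :\ z)) ?setD11 ?subsetD1 ?srho //.
  by rewrite pR ?setD11 // setD1K.
- apply/setP => t; rewrite !inE; case: (boolP (t \in K)) => // tK.
  by rewrite /= andbT; apply/esym/norP; split; apply: contraTneq tK => ->; apply: notK.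
Qed.

Lemma collapses_setU_paired (K R : {set {set T}}) :
  paired_by R -> upper_disjoint K R -> collapses (K :|: R) K.
Proof.
elim: {R}_.+1 {-2}R (ltnSn #|R|) => // n IH R leRn pR upR.
have [-> | /set0Pn [s0 s0R]] := eqVneq R set0; first by rewrite setU0; apply: collapses_refl.
have s0zR : s0 :\ z \in [set t in R | z \notin t].
  rewrite inE setD11 andbT; case: (boolP (z \in s0)) => zs0.
    by rewrite pR ?setD11 // setD1K.
  by rewrite (setDidPl _) // disjoint_sym disjoints1.
have [s sRz smax] := arg_maxnP (fun t : {set T} => #|t|) s0zR.
have /[!inE] /andP [sR zs] : s \in [set t in R | z \notin t] := sRz.
apply: collapses_step (elem_collapse_paired pR upR sR zs _) _.
  by move=> t tR zt; apply: smax; apply/setIdP.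
apply: IH; [| exact: paired_by_setD | by move=> t u /setDP [tR _]; apply: upR].
rewrite -ltnS (leq_trans _ leRn) // ltnS cardsD ltn_subrL !card_gt0.
by apply/andP; split; apply/set0Pn; exists s; rewrite // !inE eqxx sR.
Qed.
End PairedFaces.

Import Order.TTheory.
Local Open Scope order_scope.

Lemma exists_minimal (d : Order.disp_t) (T : finPOrderType d) (A : {set T}) :
  A != set0 -> exists2 x, x \in A & forall y, y \in A -> ~~ (y < x).
Proof.
case/set0Pn => a aA; pose rank x := #|[set w : T | w < x]|.
have [x xA xmin] := arg_minnP rank aA; exists x => // y yA.
apply: contraTN (xmin y yA) => yx; rewrite -ltnNge; apply: proper_card.
rewrite properE; apply/andP; split.
  by apply/subsetP => w; rewrite !inE => /lt_trans; apply.
by apply/subsetP => /(_ y); rewrite !inE ltxx yx => /(_ isT).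
Qed.

Section OrderComplex.
Context {d : Order.disp_t} {L : finTBLatticeType d}.
Implicit Types (P s t : {set L}).

Lemma is_chainP s : reflect {in s &, forall a b, a >=< b} (is_chain s).
Proof.
apply: (iffP forall_inP) => [h a b aS bS | h a aS].
  by have /forall_inP := h a aS; apply.
by apply/forall_inP => b bS; apply: h.
Qed.

Lemma is_chain_subset s t : s \subset t -> is_chain t -> is_chain s.
Proof. by move=> /subsetP st /is_chainP h; apply/is_chainP => a b /st aS /st; apply: h. Qed.

Lemma order_complexD1 P x :
  order_complex P = order_complex (P :\ x) :|: [set s in order_complex P | x \in s].
Proof.
apply/setP => s; rewrite !inE subsetD1.
by case: (boolP (x \in s)); rewrite ?andbT ?andbF ?orbF.
Qed.

(* The link of [x] in the order complex of [P] is a cone with apex [z]. *)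
Lemma collapses_order_complexD1 P x z :
  x \in P -> z \in P -> z != x -> x >=< z ->
  {in P, forall y, y != x -> x >=< y -> z >=< y} ->
  collapses (order_complex P) (order_complex (P :\ x)).
Proof.
move=> xP zP zx xz cone; rewrite {1}(order_complexD1 P x).
apply: (@collapses_setU_paired _ z).
  move=> s zs; rewrite !inE (eq_sym x z) (negbTE zx) /=.
  case: (boolP (x \in s)) => xs; rewrite ?andbF //= !andbT.
  apply/idP/idP => /and3P [_ sP ch]; apply/and3P; split.
  - by apply/set0Pn; exists z; rewrite setU11.
  - by rewrite subUset sub1set zP.
  - have zs' : {in s, forall w, z >=< w}.
      move=> w ws; have [-> | wx] := eqVneq w x; first by rewrite comparable_sym.
      by apply: cone (subsetP sP w ws) wx (is_chainP _ ch x w xs ws).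
    apply/is_chainP => a b /setU1P [-> | aS] /setU1P [-> | bS].
    + exact: comparablexx.
    + exact: zs'.
    + by rewrite comparable_sym zs'.
    + exact: (is_chainP _ ch).
  - by apply/set0Pn; exists x.
  - exact: subset_trans (subsetU1 z s) sP.
  - exact: is_chain_subset (subsetU1 z s) ch.
move=> s t /[!inE] /andP [_ xs] /subsetP st; apply/negP => /and3P [_ /subsetP tP _].
by have := tP x (st x xs); rewrite setD11.
Qed.
End OrderComplex.

Section Duality.
Context {d : Order.disp_t} {L : finTBLatticeType d}.

Lemma Lbar_dual : @Lbar _ L^d = @Lbar _ L.
Proof. by apply/setP => x; rewrite !inE andbC. Qed.

Lemma is_chain_dual (s : {set L}) : @is_chain _ L^d s = is_chain s.
Proof.
apply: eq_forallb => x; congr (_ ==> _); apply: eq_forallb => y.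
by rewrite comparable_sym.
Qed.

Lemma LbarC_dual (C : {set L}) : @LbarC _ L^d C = LbarC C.
Proof.
apply/setP => x; rewrite !inE; congr andb; first by rewrite andbC.
by apply: eq_existsb => S; rewrite orbC.
Qed.

Lemma order_complex_dual (P : {set L}) : @order_complex _ L^d P = order_complex P.
Proof. by apply/setP => s; rewrite !inE is_chain_dual. Qed.

Lemma crosscut_dual (C : {set L}) : crosscut C -> @crosscut _ L^d C.
Proof.
case=> CLbar anti meets; split; first by rewrite Lbar_dual.
  by move=> x y xC yC yx; apply/esym/anti.
by move=> g; rewrite is_chain_dual => /meets [x xC]; exists x; rewrite // is_chain_dual.
Qed.

End Duality.

Section Crosscut.
Context {d : Order.disp_t} {L : finTBLatticeType d} (C : {set L}).
Hypothesis crossC : crosscut C.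
Implicit Types (P : {set L}).

Lemma LbarC_sub_Lbar : LbarC C \subset Lbar.
Proof. by apply/subsetP => x; rewrite inE => /andP []. Qed.

Definition above_crosscut : {set L} :=
  [set x | (x \notin LbarC C) && [exists c in C, c < x]].

Lemma crosscut_Lbar c : c \in C -> c \in Lbar.
Proof. by case: crossC => /subsetP CLbar _ _; apply: CLbar. Qed.

Lemma crosscut_antichain c c' : c \in C -> c' \in C -> c <= c' -> c = c'.
Proof. by case: crossC => _ anti _; apply: anti. Qed.

Lemma crosscut_comparable2 a b :
  a >=< b -> exists2 c, c \in C & (c >=< a) && (c >=< b).
Proof.
move=> ab; case: crossC => _ _ /(_ [set a; b]) [].
  by apply/is_chainP => u v /set2P [] -> /set2P [] ->;
     rewrite ?comparablexx // comparable_sym.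
by move=> c cC /is_chainP ch; exists c; rewrite // !ch ?setU11 // !inE eqxx ?orbT.
Qed.

Lemma crosscut_sub_LbarC : C \subset LbarC C.
Proof.
apply/subsetP => c cC; rewrite inE crosscut_Lbar //=; apply/existsP; exists [set c].
by rewrite big_set1 eqxx sub1set cC orTb !andbT; apply/set0Pn; exists c; rewrite set11.
Qed.

Lemma LbarCP y : y \in LbarC C ->
  exists2 S : {set L}, (S != set0) && (S \subset C) &
    (y = \join_(c in S) c) \/ (y = \meet_(c in S) c).
Proof.
rewrite inE => /andP [_ /existsP [S /andP [SC /orP yS]]].
by exists S => //; case: yS => /eqP; [left | right].
Qed.

Definition join_below x := \join_(c in [set c in C | c <= x]) c.

Lemma join_below_le x : join_below x <= x.
Proof. by apply: joins_le => c; rewrite inE => /andP []. Qed.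

Lemma le_join_below x c : c \in C -> c <= x -> c <= join_below x.
Proof. by move=> cC cx; apply: joins_sup; rewrite inE cC. Qed.

Lemma join_below_LbarC x c0 :
  x \in Lbar -> c0 \in C -> c0 <= x -> join_below x \in LbarC C.
Proof.
move=> xL c0C c0x; have c0z := le_join_below c0C c0x.
move: (crosscut_Lbar c0C) xL; rewrite !inE => /andP [c0_neq0 _] /andP [_ x_neq1].
apply/andP; split.
  apply/andP; split; first by apply: contraTneq c0z => ->; rewrite lex0.
  by apply: contraTneq (join_below_le x) => ->; rewrite le1x.
apply/existsP; exists [set c in C | c <= x]; rewrite eqxx orTb andbT.
apply/andP; split; first by apply/set0Pn; exists c0; rewrite inE c0C.
by apply/subsetP => c; rewrite inE => /andP [].
Qed.

Lemma comparable_join_below P x c0 : c0 \in C -> c0 < x ->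
  {in P, forall y, y < x -> y \notin above_crosscut} ->
  {in P, forall y, x >=< y -> join_below x >=< y}.
Proof.
move=> c0C c0x xmin y yP /orP [xy | yx].
  exact: le_comparable (le_trans (join_below_le x) xy).
have [-> | neyx] := eqVneq y x; first exact: le_comparable (join_below_le x).
have ltyx : y < x by rewrite lt_neqAle neyx.
apply: ge_comparable.
have [c cC /andP [cx cy]] := crosscut_comparable2 (ge_comparable yx).
have {}cx : c <= x.
  case/orP: cx => // xc; have ec := crosscut_antichain c0C cC (le_trans (ltW c0x) xc).
  by move: (lt_le_trans c0x xc); rewrite ec ltxx.
have cz := le_join_below cC cx.
case/orP: cy => [cy | yc]; last exact: le_trans yc cz.
case: (boolP (y \in LbarC C)) => [yC | yC]; last first.
  have ltcy : c < y.
    rewrite lt_neqAle cy andbT; apply: contraNneq yC => <-.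
    exact: (subsetP crosscut_sub_LbarC).
  by move: (xmin y yP ltyx); rewrite inE yC; case/existsP; exists c; rewrite cC.
have [S /andP [S0 SC] [ey | ey]] := LbarCP yC.
  rewrite ey; apply: joins_le => t tS; apply: le_join_below; first exact: (subsetP SC).
  by apply: le_trans (ltW ltyx); rewrite ey; apply: joins_sup.
have [t tS] := set0Pn _ S0.
have yt : y <= t by rewrite ey; apply: meets_inf.
have ect := crosscut_antichain cC (subsetP SC t tS) (le_trans cy yt).
by apply: le_trans cz; rewrite ect.
Qed.

Lemma collapses_delete_minimal_above P x :
  LbarC C \subset P -> x \in P -> x \in Lbar -> x \in above_crosscut ->
  {in P, forall y, y < x -> y \notin above_crosscut} ->
  collapses (order_complex P) (order_complex (P :\ x)).
Proof.
move=> CP xP xL; rewrite [x \in _]inE => /andP [xC /exists_inP [c0 c0C c0x]] xmin.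
have zC := join_below_LbarC xL c0C (ltW c0x).
apply: (collapses_order_complexD1 xP (subsetP CP _ zC)).
- by apply: contraNneq _ xC => <-.
- by rewrite comparable_sym le_comparable ?join_below_le.
- by move=> y yP _; apply: comparable_join_below c0C c0x xmin y yP.
Qed.

Lemma collapses_setD_above_crosscut P :
  LbarC C \subset P -> P \subset Lbar ->
  collapses (order_complex P) (order_complex (P :\: above_crosscut)).
Proof.
elim: {P}_.+1 {-2}P (ltnSn #|P :&: above_crosscut|) => // n IH P leAn CP PL.
have [A0 | A0] := eqVneq (P :&: above_crosscut) set0.
  have -> : P :\: above_crosscut = P by apply/setDidPl; rewrite -setI_eq0 A0.
  exact: collapses_refl.
have [x /setIP [xP xA] xmin] := exists_minimal A0.
have -> : P :\: above_crosscut = (P :\ x) :\: above_crosscut.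
  by apply/setP => y; rewrite !in_setD in_set1; case: eqVneq => [->|]; rewrite ?xA.
apply: collapses_trans (collapses_delete_minimal_above CP xP (subsetP PL x xP) xA _) _.
  by move=> y yP yx; apply: contraTN yx => yA; apply: xmin; apply/setIP.
apply: IH.
- by move: leAn; rewrite setIDAC (cardsD1 x (P :&: _)) inE xP xA.
- by rewrite subsetD1 CP; move: xA; rewrite inE => /andP [].
- exact: subset_trans (subD1set P x) PL.
Qed.

End Crosscut.

(* In [L^d], [above_crosscut C] consists of the elements strictly below C. *)
Lemma Lbar_setD_above_crosscut_dual (d : Order.disp_t) (L : finTBLatticeType d)
    (C : {set L}) : crosscut C ->
  (Lbar :\: above_crosscut C : {set L^d}) :\: @above_crosscut _ L^d C = LbarC C.
Proof.
move=> crossC; apply/setP => x; rewrite !in_setD.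
rewrite [x \in @above_crosscut _ L^d C]inE [x \in above_crosscut C]inE LbarC_dual.
case: (boolP (x \in LbarC C)) => [xC | xC] /=.
  by move: xC; rewrite inE => /andP [].
apply/negP => /and3P [/exists_inP below /exists_inP above _].
have [c cC /andP [cx _]] := crosscut_comparable2 crossC (comparablexx x).
have cnx : c != x.
  by apply: contraNneq xC => <-; apply: (subsetP (crosscut_sub_LbarC crossC)).
case/orP: cx => [cx | xc]; [apply: above | apply: below]; exists c => //.
  by rewrite lt_neqAle cnx.
by rewrite ltEdual lt_neqAle eq_sym cnx.
Qed.

Theorem mainTheorem5 (d : Order.disp_t) (L : finTBLatticeType d) (C : {set L}) :
  crosscut C -> collapses (order_complex (@Lbar d L)) (order_complex (LbarC C)).
Proof.
move=> crossC; set P := Lbar :\: above_crosscut C.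
have LbarC_P : LbarC C \subset P.
  apply/subsetP => x xC; rewrite in_setD (subsetP (LbarC_sub_Lbar C) x xC) andbT.
  by rewrite inE xC.
apply: collapses_trans (collapses_setD_above_crosscut crossC (LbarC_sub_Lbar C) (subxx _)) _.
have := @collapses_setD_above_crosscut _ L^d C (crosscut_dual crossC) P.
rewrite LbarC_dual Lbar_dual subsetDl !order_complex_dual Lbar_setD_above_crosscut_dual //.
by apply.
Qed.
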